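(* Let $G=(V,E)$ be an undirected graph with $|V|=n$, let $k\ge 1$, and assume that no set of $k$ vertices of $G$ dominates $G$. Construct the undirected graph $G'$ as follows: its vertex set consists of one node $x_S$ for every $k$-element subset $S\subseteq V$ together with one node $v'$ for every $v\in V$; the nodes $\{v' : v\in V\}$ form a clique; and $x_S$ is adjacent to $v'$ if and only if $S$ does not dominate $v$ in $G$ (i.e., $v\notin S$ and $v$ has no neighbor in $S$); there are no other edges. Then $G'$ has $\binom{n}{k}+n$ nodes and $O(n^{k+1})$ edges, and the diameter of $G'$ is $2$ if $G$ has no dominating set of size at most $2k$, and $3$ if $G$ has a dominating set of size at most $2k$.
   Context: A set $S\subseteq V$ dominates a vertex $v$ if $v\in S$ or $v$ is adjacent to some vertex of $S$; $S$ is a dominating set if it dominates every vertex. *)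

From mathcomp Require Import all_boot.
Set Implicit Arguments. Unset Strict Implicit. Unset Printing Implicit Defensive.

Section Defs.
Variable T : finType.
Variable adj : rel T.

Definition dominates (S : {set T}) (v : T) : bool :=
  (v \in S) || [exists u in S, adj u v].

Definition dominating (S : {set T}) : bool := [forall v, dominates S v].

Definition kset (k : nat) := {S : {set T} | #|S| == k}.

(* vertices of G' : inl S = x_S, inr v = v' *)
Definition Gp_vertex (k : nat) := (kset k + T)%type.

Definition Gp_adj (k : nat) : rel (Gp_vertex k) := fun a b =>
  match a, b with
  | inl _, inl _ => false
  | inl X, inr v => ~~ dominates (val X) v
  | inr v, inl X => ~~ dominates (val X) v
  | inr u, inr v => u != v
  end.
End Defs.

Section Graphs.
Variable V : finType.
Variable e : rel V.

Definition edge_set : {set {set V}} := [set [set p.1; p.2] | p in [set q : V * V | e q.1 q.2]].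

Definition walk_le (u v : V) (l : nat) : Prop :=
  exists p : seq V, [/\ size p <= l, path e u p & last u p = v].

(* the diameter (max over pairs of shortest-path distance) equals d *)
Definition diameter_is (d : nat) : Prop :=
  (forall u v, walk_le u v d) /\
  (exists u v, forall l, walk_le u v l -> d <= l).
End Graphs.

From mathcomp Require Import all_boot.
From mathcomp Require Import zify.

Set Implicit Arguments.
Unset Strict Implicit.
Unset Printing Implicit Defensive.

(* Every edge of G' has an endpoint in the clique {v'}, which gives
   the node and edge counts.  For the diameter, the key observation is that,
   since no k-set dominates G, every x_S has a clique neighbour; hence every
   pair involving a clique node is at distance <= 2 and any two nodes x_S,
   x_R are at distance <= 3.  Moreover x_S and x_R are at distance <= 2
   exactly when S :|: R is not dominating (a common neighbour is a vertex
   dominated by neither S nor R).  Therefore: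
   - without dominating sets of size <= 2k, all distances are <= 2, while
     x_S and v' with v \in S are not adjacent, so the diameter is 2;
   - a dominating set D of size <= 2k is covered by two k-sets S1, S2, and
     then x_S1, x_S2 are at distance exactly 3, so the diameter is 3.
   The file first develops walks and diameters of an arbitrary finite graph,
   then sets and domination, then the properties of G', and ends with the
   theorem. *)

Lemma bin_leq_exp n m : 'C(n, m) <= n ^ m.
Proof.
have ffact_le : n ^_ m <= n ^ m.
  rewrite ffact_prod; apply: (@leq_trans (\prod_(i < m) n)).
    by apply: leq_prod => i _; apply: leq_subr.
  by rewrite prod_nat_const card_ord.
by apply: leq_trans ffact_le; rewrite -bin_ffact leq_pmulr ?fact_gt0.
Qed.

Lemma leq_exp_self n m : 0 < m -> n <= n ^ m.
Proof. by case: n => // n m_gt0; rewrite -{1}(expn1 n.+1) leq_pexp2l. Qed.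

Lemma extend_set (T : finType) (A B : {set T}) m :
  A \subset B -> #|A| <= m <= #|B| ->
  exists C : {set T}, [/\ A \subset C, C \subset B & #|C| = m].
Proof.
move=> sAB /andP [].
move Hd: (m - #|A|) => d; elim: d A sAB Hd => [|d IH] A sAB Hd leAm lemB.
  by exists A; split=> //; apply/eqP; rewrite eqn_leq leAm -subn_eq0 Hd.
have ltAB : #|A| < #|B| by apply: (@leq_trans m) => //; rewrite -subn_gt0 Hd.
have /properP [_ [x xB xA]] : A \proper B by rewrite properEcard sAB ltAB.
have sxAB : x |: A \subset B by rewrite subUset sub1set xB sAB.
have cardxA : #|x |: A| = #|A|.+1 by rewrite cardsU1 xA.
have dxA : m - #|x |: A| = d by rewrite cardxA subnS Hd.
have lexAm : #|x |: A| <= m by rewrite cardxA -subn_gt0 Hd.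
have [C [sxAC sCB cardC]] := IH _ sxAB dxA lexAm lemB.
by exists C; split=> //; apply: subset_trans sxAC; apply: subsetUr.
Qed.

Section Walks.
Variables (V : finType) (e : rel V).

Lemma walk_le_refl u l : walk_le e u u l.
Proof. by exists [::]; split. Qed.

Lemma walk_le_mono u v l l' : walk_le e u v l -> l <= l' -> walk_le e u v l'.
Proof. by move=> [p [sp pp lp]] ll'; exists p; split=> //; apply: leq_trans ll'. Qed.

Lemma walk_le_edge u v : e u v -> walk_le e u v 1.
Proof. by move=> euv; exists [:: v]; rewrite /= euv. Qed.

Lemma walk_le_cat u v w l m :
  walk_le e u v l -> walk_le e v w m -> walk_le e u w (l + m).
Proof.
move=> [p [sp pp lp]] [q [sq pq lq]]; exists (p ++ q).
by rewrite size_cat leq_add // cat_path pp lp pq last_cat lp.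
Qed.

Lemma diameter_isP d :
  (forall u v, walk_le e u v d.+1) -> (exists u v, ~ walk_le e u v d) ->
  diameter_is e d.+1.
Proof.
move=> walks [u [v no_walk]]; split=> //; exists u, v => l wl.
by rewrite ltnNge; apply/negP => ld; apply: no_walk; apply: walk_le_mono wl ld.
Qed.

Lemma card_edge_set_cover (C : {set V}) :
  (forall x y, e x y -> (x \in C) || (y \in C)) ->
  #|edge_set e| <= #|V| * #|C|.
Proof.
move=> cover; rewrite -cardsT -cardsX.
apply: leq_trans (leq_imset_card (fun p : V * V => [set p.1; p.2]) _).
apply/subset_leq_card/subsetP => E /imsetP [[x y]]; rewrite inE /= => exy ->.
have /orP [xC|yC] := cover x y exy.
  by apply/imsetP; exists (y, x); rewrite ?in_setX ?in_setT //= setUC.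
by apply/imsetP; exists (x, y); rewrite ?in_setX ?in_setT.
Qed.

End Walks.

Section Domination.
Variables (T : finType) (adj : rel T).

Lemma dominates_sub (A B : {set T}) v :
  A \subset B -> dominates adj A v -> dominates adj B v.
Proof.
move=> sAB /orP [vA|/existsP [u /andP [uA auv]]].
  by rewrite /dominates (subsetP sAB _ vA).
by apply/orP; right; apply/existsP; exists u; rewrite (subsetP sAB _ uA).
Qed.

Lemma dominating_sub (A B : {set T}) :
  A \subset B -> dominating adj A -> dominating adj B.
Proof.
by move=> sAB /forallP domA; apply/forallP => v; apply: dominates_sub (domA v).
Qed.

Lemma dominatesU (A B : {set T}) v :
  dominates adj (A :|: B) v = dominates adj A v || dominates adj B v.
Proof.
apply/idP/idP; last by case/orP; apply: dominates_sub; rewrite ?subsetUl ?subsetUr.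
rewrite /dominates in_setU => /orP [/orP [-> | ->] | /existsP [u /andP [uAB auv]]];
  rewrite ?orbT //.
have [uA | uB] := setUP uAB; apply/orP; [left | right]; apply/orP; right;
  by apply/existsP; exists u; rewrite ?uA ?uB.
Qed.

End Domination.

Section Reduction.
Variables (T : finType) (adj : rel T) (k : nat).
Hypothesis k_ge1 : 1 <= k.
Hypothesis no_k_dom : forall S : {set T}, #|S| <= k -> ~~ dominating adj S.

Local Notation G' := (@Gp_adj T adj k).
Local Notation vertex := (Gp_vertex T k).

Lemma card_Gp_vertex : #|{: vertex}| = 'C(#|T|, k) + #|T|.
Proof.
rewrite card_sum card_sig -card_draws; congr (_ + _).
by apply: eq_card => S; rewrite inE.
Qed.

(* Every edge of G' meets the clique, whence the edge bound. *)
Lemma card_edge_set_Gp : #|edge_set G'| <= 2 * #|T| ^ k.+1.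
Proof.
pose clique := [set (inr v : vertex) | v : T].
have meets_clique (x y : vertex) : G' x y -> (x \in clique) || (y \in clique).
  by case: x y => [X|u] [Y|v] //= _; rewrite ?imset_f ?orbT.
apply: leq_trans (card_edge_set_cover meets_clique) _.
rewrite card_Gp_vertex expnSr mulnA mul2n -addnn.
apply: leq_mul; first by rewrite leq_add ?bin_leq_exp ?leq_exp_self.
exact: leq_imset_card.
Qed.

Lemma kset_undominated (X : kset T k) : exists w, ~~ dominates adj (val X) w.
Proof.
have /no_k_dom/forallPn [w undom_w] : #|val X| <= k by rewrite (eqP (valP X)).
by exists w.
Qed.

(* The whole vertex set dominates G, so G has more than k vertices. *)
Lemma k_lt_card : k < #|T|.
Proof.
rewrite ltnNge; apply/negP => le_T_k.
have /no_k_dom/negP : #|[set: T]| <= k by rewrite cardsT.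
by apply; apply/forallP => v; rewrite /dominates in_setT.
Qed.

Lemma kset_extend (A : {set T}) : #|A| <= k -> exists X : kset T k, A \subset val X.
Proof.
move=> leAk; have := extend_set (subsetT A); rewrite cardsT.
case/(_ k); first by rewrite leAk ltnW ?k_lt_card.
by move=> C [sAC _ /eqP cardC]; exists (exist _ C cardC).
Qed.

(* A set of at most 2k vertices is covered by two k-sets: split it into a part
   of size min(#|D|, k) and the remainder, and extend both parts. *)
Lemma kset_cover2 (D : {set T}) :
  #|D| <= 2 * k -> exists X Y : kset T k, D \subset val X :|: val Y.
Proof.
move=> leD2k.
have [|D1 [_ sD1D cardD1]] := extend_set (sub0set D) (m := minn #|D| k).
  by rewrite cards0 geq_minl.
have [X sD1X] : exists X : kset T k, D1 \subset val X.
  by apply: kset_extend; rewrite cardD1 geq_minr.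
have [Y sDD1Y] : exists Y : kset T k, D :\: D1 \subset val Y.
  apply: kset_extend; rewrite cardsD (setIidPr sD1D) cardD1.
  by move: leD2k; clear; lia.
by exists X, Y; rewrite -(setID D D1) (setIidPr sD1D) setUSS.
Qed.

(* Clique nodes are at distance <= 1, and a clique node and a k-set node are at
   distance <= 2, passing through a clique neighbour of the k-set node. *)
Lemma clique_walk (a b : T) : walk_le G' (inr a) (inr b) 1.
Proof.
have [<-|neq_ab] := eqVneq a b; first exact: walk_le_refl.
by apply: walk_le_edge; rewrite /= neq_ab.
Qed.

Lemma kset_clique_walk (X : kset T k) (b : T) : walk_le G' (inl X) (inr b) 2.
Proof.
have [w undom_w] := kset_undominated X.
apply: (walk_le_cat (l := 1) (m := 1) (v := inr w)); first exact: walk_le_edge.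
exact: clique_walk.
Qed.

Lemma clique_kset_walk (b : T) (X : kset T k) : walk_le G' (inr b) (inl X) 2.
Proof.
have [w undom_w] := kset_undominated X.
apply: (walk_le_cat (l := 1) (m := 1) (v := inr w)); first exact: clique_walk.
exact: walk_le_edge.
Qed.

Lemma kset_kset_walk3 (X Y : kset T k) : walk_le G' (inl X) (inl Y) 3.
Proof.
have [w undom_w] := kset_undominated X.
apply: (walk_le_cat (l := 1) (m := 2) (v := inr w)); first exact: walk_le_edge.
exact: clique_kset_walk.
Qed.

(* Key lemma: x_X and x_Y are at distance <= 2 iff X :|: Y does not dominate;
   for X = Y this uses that no k-set dominates. *)
Lemma kset_walk2E (X Y : kset T k) :
  walk_le G' (inl X) (inl Y) 2 <-> ~~ dominating adj (val X :|: val Y).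
Proof.
split.
  move=> [p [size_p walk_p end_p]].
  case: p size_p walk_p end_p => [|[Z|w] [|[Z'|w'] [|? ?]]] //=.
  - by move=> _ _ [<-]; rewrite setUid no_k_dom ?(eqP (valP X)).
  - move=> _ /and3P [undom_X undom_Z _] [eq_ZY]; subst Z'.
    by rewrite /dominating; apply/forallPn; exists w; rewrite dominatesU negb_or undom_X.
rewrite /dominating => /forallPn [w]; rewrite dominatesU negb_or.
move=> /andP [undom_X undom_Y].
by exists [:: inr w; inl Y]; rewrite /= undom_X undom_Y.
Qed.

Lemma kset_walk1 (X : kset T k) (v : T) :
  walk_le G' (inl X) (inr v) 1 -> ~~ dominates adj (val X) v.
Proof.
move=> [p [size_p walk_p end_p]].
case: p size_p walk_p end_p => [|y [|? ?]] //= _ /andP [edge_Xy _] eq_yv.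
by rewrite eq_yv in edge_Xy.
Qed.

Lemma Gp_walk_bound d :
  2 <= d -> (forall X Y, walk_le G' (inl X) (inl Y) d) ->
  forall u v, walk_le G' u v d.
Proof.
move=> le2d kset_walks [X|a] [Y|b]; first exact: kset_walks.
- exact: walk_le_mono (kset_clique_walk X b) le2d.
- exact: walk_le_mono (clique_kset_walk a Y) le2d.
- exact: walk_le_mono (clique_walk a b) (ltnW le2d).
Qed.

Lemma diameter_Gp2 :
  ~ (exists D : {set T}, #|D| <= 2 * k /\ dominating adj D) -> diameter_is G' 2.
Proof.
move=> no_2k_dom; apply: diameter_isP.
  apply: Gp_walk_bound => // X Y; apply/kset_walk2E/negP => dom_XY.
  apply: no_2k_dom; exists (val X :|: val Y); split=> //.
  by rewrite cardsU (eqP (valP X)) (eqP (valP Y)) mul2n -addnn leq_subr.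
have [v0 _] : exists v0 : T, v0 \in T.
  by apply/card_gt0P; apply: leq_ltn_trans k_lt_card.
have [X0 sv0X0] : exists X0 : kset T k, [set v0] \subset val X0.
  by apply: kset_extend; rewrite cards1.
exists (inl X0), (inr v0) => /kset_walk1.
by rewrite /dominates -sub1set sv0X0.
Qed.

Lemma diameter_Gp3 :
  (exists D : {set T}, #|D| <= 2 * k /\ dominating adj D) -> diameter_is G' 3.
Proof.
case=> D [leD2k domD]; apply: diameter_isP.
  exact: Gp_walk_bound kset_kset_walk3.
have [X [Y sDXY]] := kset_cover2 leD2k.
exists (inl X), (inl Y) => /kset_walk2E/negP; apply.
exact: dominating_sub domD.
Qed.

End Reduction.

Theorem mainTheorem3 (T : finType) (adj : rel T) (k : nat)
  (adj_sym : symmetric adj) (adj_irr : irreflexive adj)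
  (k_ge1 : 1 <= k)
  (no_k_dom : forall S : {set T}, #|S| <= k -> ~~ dominating adj S) :
  #|{: Gp_vertex T k}| = 'C(#|T|, k) + #|T|
  /\ #|edge_set (@Gp_adj T adj k)| <= 2 * #|T| ^ k.+1
  /\ ((~ exists D : {set T}, #|D| <= 2 * k /\ dominating adj D) ->
        diameter_is (@Gp_adj T adj k) 2)
  /\ ((exists D : {set T}, #|D| <= 2 * k /\ dominating adj D) ->
        diameter_is (@Gp_adj T adj k) 3).
Proof.
split; first exact: card_Gp_vertex.
split; first exact: card_edge_set_Gp.
by split; [apply: diameter_Gp2 | apply: diameter_Gp3].
Qed.
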